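(* Let $\Gamma=(V,E)$ be a $2$-connected finite graph and let $$Z_\Gamma(q,v)=\sum_{A\subseteq E}q^{k(A)}v^{|A|},$$ where $k(A)$ is the number of connected components (including isolated vertices) of the spanning subgraph $(V,A)$. Write $Z_\Gamma(q,v)=q\,\widetilde Z_\Gamma(q,v)$ in $\mathbb{C}[q,v]$. Then $\widetilde Z_\Gamma(q,v)$ is irreducible in $\mathbb{C}[q,v]$. The same holds in the variables $(q,y)$ with $y=v+1$.
   Context: A graph is $2$-connected if it has at least three vertices and no vertex whose removal disconnects it. $Z_\Gamma$ is the partition function of the $q$-state Potts model in the Fortuin–Kasteleyn representation; it is divisible by $q$ since $k(A)\ge1$ for all $A$. *)

From HB Require Import structures.
From mathcomp Require Import all_boot all_order all_algebra.
From mathcomp Require Import complex.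
From mathcomp Require Import reals.
Set Implicit Arguments. Unset Strict Implicit. Unset Printing Implicit Defensive.
Import Order.TTheory GRing.Theory Num.Theory.
Local Open Scope ring_scope.

Definition simple_graph (V : finType) (e : rel V) : Prop :=
  irreflexive e /\ symmetric e.

Definition edges (V : finType) (e : rel V) : {set {set V}} :=
  [set [set p.1; p.2] | p : V * V & e p.1 p.2].

Definition sub_rel (V : finType) (A : {set {set V}}) : rel V :=
  fun x y => [set x; y] \in A.

Definition ncomp (V : finType) (A : {set {set V}}) : nat :=
  n_comp (sub_rel A) [pred x : V | true].

Definition two_connected (V : finType) (e : rel V) : Prop :=
  [/\ (3 <= #|V|)%N,
      (forall x y : V, connect e x y) &
      (forall w x y : V, x != w -> y != w ->
         connect (fun a b => [&& a != w, b != w & e a b]) x y)].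

(* The multivariate (FK) Potts partition function in C[q,v], with
   C = complex R for a real field R : realType; represented in
   {poly {poly C}} with q := 'X (outer variable) and v := 'X%:P. *)
Definition Zpotts (R : realType) (V : finType) (e : rel V)
  : {poly {poly R[i]}} :=
  \sum_(A : {set {set V}} | A \subset edges e)
     'X ^+ ncomp A * ('X%:P) ^+ #|A|.

(* The same in the variables (q, y), y = v + 1, i.e. v = y - 1. *)
Definition Zpotts_y (R : realType) (V : finType) (e : rel V)
  : {poly {poly R[i]}} :=
  \sum_(A : {set {set V}} | A \subset edges e)
     'X ^+ ncomp A * ('X%:P - 1) ^+ #|A|.

Definition irreducible_elt (D : idomainType) (p : D) : Prop :=
  [/\ p != 0, p \isn't a GRing.unit &
      forall a b : D, p = a * b -> a \is a GRing.unit \/ b \is a GRing.unit].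

(* Write Z = q Z'. As a polynomial in v, Z' is monic of degree |E|: the only
   term of top v-degree is q v^|E|, since Γ is connected. Moreover
   Z'(1, v) = (v + 1)^|E|. Hence in a factorisation Z' = a b both factors
   have constant leading v-coefficients, and a factor of positive v-degree
   vanishes at (q, v) = (1, -1). If both factors did, so would ∂_q Z; but
   ∂_q Z(1, -1) = Σ_A (-1)^|A| k(A) is, up to sign, Crapo's beta invariant of
   Γ, which is positive for 2-connected graphs. Positivity of beta follows
   from deletion-contraction along an ear decomposition: beta is nonnegative,
   equals 1 on a single edge and does not decrease when an ear is added.
   The substitution v = y - 1 only moves the evaluation point. *)

From HB Require Import structures.
From mathcomp Require Import all_boot all_order all_algebra.
From mathcomp Require Import complex.
From mathcomp Require Import reals.
Import Order.TTheory GRing.Theory Num.Theory.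

Set Implicit Arguments. Unset Strict Implicit. Unset Printing Implicit Defensive.

Lemma connect_preserves (T : finType) (r : rel T) (Q : pred T) a b :
  (forall c d, r c d -> Q c -> Q d) -> connect r a b -> Q a -> Q b.
Proof.
move=> Qr /connectP[p pp ->]; elim: p a pp => //= c p IH a /andP[rac pp] Qa.
exact: IH pp (Qr _ _ rac Qa).
Qed.

Lemma connect_exit (T : finType) (r : rel T) (W : {set T}) x z :
  connect r x z -> x \in W -> z \notin W ->
  exists a b, [/\ a \in W, b \notin W & r a b].
Proof.
case/connectP => p; elim: p x => [|c p IH] x /=; first by move=> _ -> ->.
case/andP => rxc pp zl xW zW.
case cW: (c \in W); first exact: IH pp zl cW zW.
by exists x, c; rewrite cW.
Qed.

Lemma set2_eqP (T : finType) (x y a b : T) : [set x; y] = [set a; b] ->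
  (x = a /\ y = b) \/ (x = b /\ y = a).
Proof.
move=> Exy.
have xab : x \in [set a; b] by rewrite -Exy set21.
have yab : y \in [set a; b] by rewrite -Exy set22.
have axy : a \in [set x; y] by rewrite Exy set21.
have bxy : b \in [set x; y] by rewrite Exy set22.
case/set2P: xab => ?; case/set2P: yab => ?; subst; auto.
- by move: bxy; rewrite in_set2 orbb => /eqP ->; left.
- by move: axy; rewrite in_set2 orbb => /eqP ->; left.
Qed.

Section SubsetSums.
Variable T : finType.
Implicit Types (S : {set T}) (A : {set T}).
Local Open Scope ring_scope.

Lemma big_subsetD1 (M : nmodType) S g (w : {set T} -> M) : g \in S ->
  \sum_(A : {set T} | A \subset S) w A =
  \sum_(A : {set T} | A \subset S :\ g) (w A + w (g |: A)).
Proof.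
move=> gS; rewrite big_split /= [LHS](bigID (fun A : {set T} => g \in A)) /= addrC.
congr (_ + _); first by apply: eq_bigl => A; rewrite subsetD1.
rewrite (reindex_onto (fun A => g |: A) (fun A => A :\ g)) /=; last first.
  by move=> A /andP[_ gA]; rewrite setD1K.
apply: eq_bigl => A; rewrite subsetD1 subUset sub1set gS setU11 /=.
case gA: (g \in A) => /=; last by rewrite setU1K ?gA // eqxx !andbT.
rewrite !andbF; apply/negbTE/negP => /andP[_ /eqP gAE].
by move: gA; rewrite -gAE setD11.
Qed.

Lemma big_subset0 (M : nmodType) (w : {set T} -> M) :
  \sum_(A : {set T} | A \subset set0) w A = w set0.
Proof.
by rewrite (eq_bigl (pred1 set0)) ?big_pred1_eq // => A; rewrite subset0.
Qed.

Lemma alternating_sum_toggle (R : pzRingType) S g (f : {set T} -> R) :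
  g \in S -> (forall A, A \subset S :\ g -> f (g |: A) = f A) ->
  \sum_(A : {set T} | A \subset S) (-1) ^+ #|A| * f A = 0.
Proof.
move=> gS fg; rewrite (big_subsetD1 _ gS); apply: big1 => A AS.
have gA : g \notin A by move: AS; rewrite subsetD1 => /andP[].
by rewrite fg // cardsU1 gA exprS mulN1r mulNr addrN.
Qed.

Lemma sum_subsets_exp (R : comPzSemiRingType) S (x : R) :
  \sum_(A : {set T} | A \subset S) x ^+ #|A| = (x + 1) ^+ #|S|.
Proof.
elim: {S}_.+1 {-2}S (ltnSn #|S|) => // n IH S leSn.
have [->|[g gS]] := set_0Vmem S; first by rewrite big_subset0 cards0.
have ltS : (#|S :\ g| < n)%N by move: leSn; rewrite (cardsD1 g S) gS.
rewrite (big_subsetD1 _ gS) (cardsD1 g S) gS exprS -IH //.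
rewrite mulr_sumr; apply: eq_bigr => A AS.
have gA : g \notin A by move: AS; rewrite subsetD1 => /andP[].
by rewrite cardsU1 gA exprS mulrDl mul1r addrC.
Qed.

End SubsetSums.

Section SpanningConnectivity.
Variable V : finType.
Implicit Types (A B C F : {set {set V}}) (x y z w a b : V).

Definition conn A := connect (sub_rel A).

Lemma sub_rel_sym A : symmetric (sub_rel A).
Proof. by move=> x y; rewrite /sub_rel setUC. Qed.

Lemma conn_sym A : connect_sym (sub_rel A).
Proof. exact: sym_connect_sym (sub_rel_sym A). Qed.

Lemma connC A x y : conn A x y = conn A y x.
Proof. exact: conn_sym. Qed.

Lemma conn_trans A x y z : conn A x y -> conn A y z -> conn A x z.
Proof. exact: connect_trans. Qed.

Lemma conn_sub A B x y : A \subset B -> conn A x y -> conn B x y.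
Proof.
move=> AB; apply: connect_sub => c d rcd; apply: connect1.
by rewrite /sub_rel (subsetP AB).
Qed.

Lemma conn_edge A a b : [set a; b] \in A -> conn A a b.
Proof. exact: connect1. Qed.

Lemma conn_setU1r A f x y : conn A x y -> conn (f |: A) x y.
Proof. exact/conn_sub/subsetUr. Qed.

Lemma sub_relU1 A a b x y :
  sub_rel ([set a; b] |: A) x y = ([set x; y] == [set a; b]) || sub_rel A x y.
Proof. by rewrite /sub_rel in_setU1. Qed.

Lemma conn_setU1 A a b : conn A a b -> conn ([set a; b] |: A) =2 conn A.
Proof.
move=> cab x y; apply/idP/idP; last exact: conn_setU1r.
apply: connect_sub => c d.
rewrite sub_relU1 => /orP[/eqP/set2_eqP[[-> ->]|[-> ->]]|]; last exact: connect1.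
  exact: cab.
by rewrite -/(conn A _ _) connC.
Qed.

Lemma conn_setU1P A a b x y : conn ([set a; b] |: A) x y ->
  [|| conn A x y, conn A x a && conn A b y | conn A x b && conn A a y].
Proof.
move=> cxy; pose Q w :=
  [|| conn A x w, conn A x a && conn A b w | conn A x b && conn A a w].
apply: (connect_preserves (Q := Q) _ cxy); last by rewrite /Q /conn connect0.
move=> c d; rewrite /Q sub_relU1 => /orP[/eqP/set2_eqP[[-> ->]|[-> ->]]|rcd].
- case/or3P => [->|/andP[-> _]|/andP[-> _]] //.
  + by rewrite /conn connect0 orbT.
  + by rewrite /conn connect0 orbT.
- case/or3P => [->|/andP[-> _]|/andP[xb ab]] //.
  + by rewrite /conn connect0 !orbT.
  + by rewrite (conn_trans xb) // connC.
- have cd : conn A c d by apply: connect1.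
  case/or3P => [xc|/andP[-> bc]|/andP[-> ac]].
  + by rewrite (conn_trans xc cd).
  + by rewrite (conn_trans bc cd) orbT.
  + by rewrite (conn_trans ac cd) !orbT.
Qed.

Lemma conn_isolated A z w : z \notin cover A -> conn A z w = (z == w).
Proof.
move=> zA; apply/idP/eqP => [|->]; last exact: connect0.
case/connectP => -[|c p] //= /andP[rzc _] _.
by case/negP: zA; apply/bigcupP; exists [set z; c]; rewrite ?set21.
Qed.

Definition linked A (g : {set V}) := [forall x in g, forall y in g, conn A x y].

Lemma linked_set2 A x y : linked A [set x; y] = conn A x y.
Proof.
apply/forall_inP/idP => [/(_ x (set21 x y))/forall_inP/(_ y (set22 x y))//|cxy].
move=> a /set2P[]-> ; apply/forall_inP => b /set2P[]->; rewrite /conn ?connect0 //.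
by rewrite -/(conn A _ _) connC.
Qed.

Lemma linked_sub A B g : A \subset B -> linked A g -> linked B g.
Proof.
move=> AB /forall_inP lg; apply/forall_inP => x /lg/forall_inP lgx.
by apply/forall_inP => y /lgx; apply: conn_sub.
Qed.

Lemma conn0 x y : conn set0 x y = (x == y).
Proof. by apply: conn_isolated; rewrite /cover big_set0 inE. Qed.

Lemma ncomp_setU1 A a b : ncomp A = ncomp ([set a; b] |: A) + ~~ conn A a b.
Proof.
set A' := [set a; b] |: A; set r := sub_rel A; set r' := sub_rel A'.
set cl := closure r (pred2 a b).
have symr := conn_sym A; have symr' := conn_sym A'.
have ncompE D : ncomp D = n_comp (sub_rel D) V.
  by apply: eq_n_comp_r => x; rewrite !inE.
rewrite !ncompE !(n_compC cl) (n_comp_closure2 symr).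
have clE : cl =i connect r' a.
  move=> w; apply/idP/idP.
  - move=> /pred0Pn[t /andP[/= wt]]; rewrite /= inE => tab.
    have at' : connect r' a t.
      case/orP: tab => /eqP ->; first exact: connect0.
      by apply: connect1; rewrite /r' sub_relU1 eqxx.
    by apply: (connect_trans at'); rewrite symr'; apply: conn_setU1r.
  - move=> aw; apply: (connect_preserves (Q := fun w => w \in cl) _ aw); last first.
      by apply: mem_closure; rewrite !inE eqxx.
    move=> c d; rewrite /r' sub_relU1 => /orP[/eqP/set2_eqP[[_ ->]|[_ ->]]|rcd] cin.
    + by apply: mem_closure; rewrite !inE eqxx orbT.
    + by apply: mem_closure; rewrite !inE eqxx.
    + by rewrite -(closure_closed symr (pred2 a b) rcd).
rewrite (eq_n_comp_r clE) n_comp_connect //.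
have -> : n_comp r' [predC cl] = n_comp r [predC cl].
  apply: eq_card => z; rewrite !inE /=.
  case zcl: (z \in cl); rewrite ?andbF // !andbT.
  have rr' : connect r' z =1 connect r z.
    move=> w; apply/idP/idP; last exact: conn_setU1r.
    move=> zw; apply: (connect_preserves (Q := connect r z) _ zw); last first.
      exact: connect0.
    move=> c d; rewrite /r' sub_relU1 => /orP[/eqP/set2_eqP[[-> _]|[-> _]]|rcd] zc.
    + by case/negP: (negbT zcl); apply/pred0Pn; exists a; rewrite /= !inE zc eqxx.
    + by case/negP: (negbT zcl); apply/pred0Pn; exists b; rewrite /= !inE zc eqxx orbT.
    + exact: connect_trans zc (connect1 rcd).
  by rewrite /roots /fingraph.root (eq_pick rr').
by rewrite /conn -/r addSn add1n addSn addnC.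
Qed.

End SpanningConnectivity.

(* P'(1) for the chromatic polynomial P(q) = \sum_A (-1)^|A| q^k(A) of (V, E). *)
Definition chromatic_deriv1 (V : finType) (E : {set {set V}}) : int :=
  \sum_(A : {set {set V}} | A \subset E) (-1) ^+ #|A| * (ncomp A)%:R.

Definition doubletons (V : finType) (F : {set {set V}}) :=
  forall f, f \in F -> exists x y, f = [set x; y].

Lemma doubletons_sub (V : finType) (F F' : {set {set V}}) :
  F' \subset F -> doubletons F -> doubletons F'.
Proof. by move=> FF' dF f /(subsetP FF') /dF. Qed.

Section Beta.
Variable V : finType.
Variables u v : V.
Implicit Types (A B C F : {set {set V}}) (g : {set V}) (x y : V).
Local Notation uv := [set u; v].
Local Open Scope ring_scope.

(* Crapo's beta invariant of the graphic matroid of (V, C :|: F) / C with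
   ground set F is (-1)^(r(F) + 1) \sum_(A \subset F) (-1)^|A| k(A :|: C),
   where r(F) = k(C) - k(C :|: F). Pairing A with uv |: A in that sum leaves
   [beta_sum], which only counts the A that do not join u and v. *)
Definition beta_sum C F : int :=
  \sum_(A : {set {set V}} | A \subset F :\ uv)
    (-1) ^+ #|A| * (~~ conn (A :|: C) u v)%:R.

Definition beta C F : int :=
  (-1) ^+ (ncomp C + ncomp (C :|: F)).+1 * beta_sum C F.

Lemma beta_sum_delete_contract C F g : g \in F -> g != uv ->
  beta_sum C F = beta_sum C (F :\ g) - beta_sum (g |: C) (F :\ g).
Proof.
move=> gF guv; have gF' : g \in F :\ uv by rewrite in_setD1 guv.
have Fswap : F :\ uv :\ g = F :\ g :\ uv by rewrite setDDl setUC -setDDl.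
rewrite /beta_sum (big_subsetD1 _ gF') Fswap -sumrB; apply: eq_bigr => A AS.
have gA : g \notin A by move: AS; rewrite !subsetD1 => /andP[/andP[]].
by rewrite cardsU1 gA exprS mulN1r mulNr setUA [g |: A]setUC -setUA.
Qed.

Lemma beta_delete_contract C F x y : let g := [set x; y] in
  g \in F -> g != uv -> ~~ conn C x y -> conn ((C :|: F) :\ g) x y ->
  beta C F = beta C (F :\ g) + beta (g |: C) (F :\ g).
Proof.
move=> g gF guv nCxy cxy.
have gC : g \notin C by apply: contra nCxy; apply: conn_edge.
have CFg : C :|: (F :\ g) = (C :|: F) :\ g.
  by apply/setP => f; rewrite !inE; case: (f =P g) => [->|]; rewrite ?(negbTE gC).
have gCFg : (g |: C) :|: (F :\ g) = C :|: F.
  by apply/setP => f; rewrite !inE; case: (f =P g) => [->|]; rewrite ?gF ?orbT.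
have kC : ncomp C = (ncomp (g |: C)).+1 by rewrite (ncomp_setU1 C x y) nCxy addn1.
have kCF : ncomp (C :|: F) = ncomp (C :|: (F :\ g)).
  rewrite CFg -{1}(setD1K (_ : g \in C :|: F)) ?inE ?gF ?orbT //.
  by rewrite (ncomp_setU1 ((C :|: F) :\ g) x y) cxy addn0.
rewrite /beta (beta_sum_delete_contract C gF guv) gCFg -kCF kC addSn exprS.
by rewrite mulrBr !mulN1r !mulNr opprK.
Qed.

Lemma beta_edge C : ~~ conn C u v -> beta C [set uv] = 1.
Proof.
move=> nCuv; rewrite /beta /beta_sum setDv big_subset0 set0U nCuv cards0 mulr1.
rewrite (ncomp_setU1 C u v) nCuv setUC addn1 addSn addnn -signr_odd /=.
by rewrite negbK odd_double.
Qed.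

Lemma beta_sum_loop C F : conn C u v -> beta_sum C F = 0.
Proof.
by move=> cuv; apply: big1 => A _; rewrite (conn_sub (subsetUr A C) cuv) mulr0.
Qed.

Lemma beta_sum_toggle C F g : g \in F :\ uv ->
  (forall A, A \subset F :\ uv :\ g ->
     conn (g |: A :|: C) u v = conn (A :|: C) u v) ->
  beta_sum C F = 0.
Proof.
by move=> gF toggle; apply: (alternating_sum_toggle gF) => A /toggle ->.
Qed.

Lemma beta_sum_loop_edge C F g : g \in F :\ uv -> linked C g -> doubletons F ->
  beta_sum C F = 0.
Proof.
move=> gF lCg dF; apply: (beta_sum_toggle gF) => A _.
have [x [y gxy]] := dF g (subsetP (subD1set F uv) g gF).
rewrite -setUA gxy; apply: conn_setU1.
by apply: conn_sub (subsetUr A C) _; rewrite -linked_set2 -gxy.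
Qed.

Lemma beta_sum_coloop C F g : g \in F :\ uv -> ~~ conn (C :|: (F :\ uv)) u v ->
  beta_sum C F = 0.
Proof.
move=> gF nCFuv; apply: (beta_sum_toggle gF) => A AS.
have nconn B : B \subset F :\ uv -> conn (B :|: C) u v = false.
  move=> BF; apply: contraNF nCFuv; apply: conn_sub.
  by rewrite setUC setUS.
have AF : A \subset F :\ uv by apply: subset_trans AS (subD1set _ g).
by rewrite !nconn // subUset sub1set gF.
Qed.

Lemma exists_cycle_edge C B : ~~ conn C u v -> doubletons B ->
  conn (C :|: B) u v -> exists2 g, g \in B & linked (uv |: (C :|: (B :\ g))) g.
Proof.
move=> nCuv; elim: {B}_.+1 {-2}B (ltnSn #|B|) => // n IH B ltBn dB cCBuv.
have [B0|[g gB]] := set_0Vmem B; first by rewrite B0 setU0 (negbTE nCuv) in cCBuv.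
have [cCBguv|nCBguv] := boolP (conn (C :|: (B :\ g)) u v).
  have ltBgn : (#|B :\ g| < n)%N by move: ltBn; rewrite (cardsD1 g B) gB.
  have [g' g'Bg lg'] := IH _ ltBgn (doubletons_sub (subD1set B g) dB) cCBguv.
  exists g'; first by move: g'Bg; rewrite in_setD1 => /andP[].
  apply: linked_sub lg'; rewrite !setUS //.
  by apply/subsetP => f; rewrite !in_setD1 => /and3P[-> _ ->].
exists g => //; have [x [y gxy]] := dB g gB.
set D := C :|: (B :\ g); have Duv : D \subset uv |: D by apply: subsetUr.
have Dcuv : conn (uv |: D) u v by apply: conn_edge; rewrite setU11.
have CBE : C :|: B = [set x; y] |: D by rewrite -gxy setUCA setD1K.
rewrite gxy linked_set2; move: cCBuv; rewrite CBE.
case/conn_setU1P/or3P => [|/andP[ux yv]|/andP[uy xv]].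
  by rewrite (negbTE nCBguv).
- apply: conn_trans (conn_trans Dcuv _); rewrite connC; exact: conn_sub Duv _.
- apply: conn_trans (conn_sub Duv xv) _; apply: conn_trans (conn_sub Duv uy).
  by rewrite connC.
Qed.

Lemma bridges_disconnect C F : uv \in F -> doubletons F -> ~~ conn C u v ->
  (forall g, g \in F :\ uv -> ~~ linked C g) ->
  (forall g, g \in F :\ uv -> ~~ linked ((C :|: F) :\ g) g) ->
  ~~ conn (C :|: (F :\ uv)) u v.
Proof.
move=> uvF dF nCuv noloop nobridge; apply/negP => cuv.
have [g gF lg] := exists_cycle_edge nCuv (doubletons_sub (subD1set F uv) dF) cuv.
case/negP: (nobridge g gF); apply: linked_sub lg.
have [x [y gxy]] := dF g (subsetP (subD1set F uv) g gF).
have gC : g \notin C.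
  by apply: contra (noloop g gF) => gC; rewrite gxy linked_set2 conn_edge -?gxy.
apply/subsetP => f; rewrite !inE; case: (f =P uv) => [->|fuv] /=.
  by rewrite uvF orbT andbT => _; apply: contraTneq gF => <-; rewrite setD11.
by case: (f =P g) => [->|] //=; rewrite (negbTE gC).
Qed.

Lemma beta_ge0 C F : uv \in F -> doubletons F -> 0 <= beta C F.
Proof.
(* A loop kills the sum, a non-bridge allows deletion-contraction, and if all
   other edges are bridges then either F = [set uv] or uv is a coloop. *)
elim: {F}_.+1 {-2}F (ltnSn #|F|) C => // n IH F ltFn C uvF dF.
have beta0 : beta_sum C F = 0 -> beta C F = 0 by rewrite /beta => ->; rewrite mulr0.
have [cuv|nCuv] := boolP (conn C u v); first by rewrite beta0 ?beta_sum_loop.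
have [/exists_inP[g gF lCg]|/exists_inP noloop] :=
  boolP [exists g in F :\ uv, linked C g].
  by rewrite beta0 // (beta_sum_loop_edge gF lCg).
have [/exists_inP[g gFuv lg]|/exists_inP nobridge] :=
  boolP [exists g in F :\ uv, linked ((C :|: F) :\ g) g].
  have [x [y gxy]] := dF g (subsetP (subD1set F uv) g gFuv).
  have nCxy : ~~ conn C x y.
    by rewrite -linked_set2 -gxy; apply/negP => lCg; apply: noloop; exists g.
  move: gFuv lg; rewrite gxy in_setD1 linked_set2 => /andP[guv gF] cxy.
  have ltFg : (#|F :\ [set x; y]| < n)%N.
    by move: ltFn; rewrite (cardsD1 [set x; y] F) gF.
  have uvFg : uv \in F :\ [set x; y] by rewrite in_setD1 eq_sym guv.
  have dFg := doubletons_sub (subD1set F [set x; y]) dF.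
  by rewrite (beta_delete_contract gF guv nCxy cxy) addr_ge0 ?IH.
have [F1|[g gF]] := set_0Vmem (F :\ uv).
  by rewrite -(setD1K uvF) F1 setU0 beta_edge.
rewrite beta0 // (beta_sum_coloop gF) // bridges_disconnect //.
- by move=> h hF; apply/negP => lCh; apply: noloop; exists h.
- by move=> h hF; apply/negP => lh; apply: nobridge; exists h.
Qed.

Lemma chromatic_deriv1_beta_sum F :
  uv \in F -> chromatic_deriv1 F = beta_sum set0 F.
Proof.
move=> uvF; rewrite /chromatic_deriv1 (big_subsetD1 _ uvF); apply: eq_bigr => A AS.
have uvA : uv \notin A by move: AS; rewrite subsetD1 => /andP[].
rewrite cardsU1 uvA exprS setU0 (ncomp_setU1 A u v) natrD mulrDr.
by rewrite mulN1r mulNr addrAC addrN add0r.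
Qed.

End Beta.

Lemma cover_setU (T : finType) (P Q : {set {set T}}) :
  cover (P :|: Q) = cover P :|: cover Q.
Proof. exact: bigcup_setU. Qed.

Lemma cover_setU1 (T : finType) (f : {set T}) (P : {set {set T}}) :
  cover (f |: P) = f :|: cover P.
Proof. by rewrite cover_setU cover1. Qed.

Lemma notin_cover_sub (T : finType) (P Q : {set {set T}}) z :
  P \subset Q -> z \notin cover Q -> z \notin cover P.
Proof.
move=> PQ; apply: contra => /bigcupP[f fP zf].
by apply/bigcupP; exists f; rewrite ?(subsetP PQ).
Qed.

(* [ear W a y P]: P is the edge set of a path from a to y \in W whose inner
   vertices are all outside W. *)
Inductive ear (V : finType) : {set V} -> V -> V -> {set {set V}} -> Prop :=
| ear_edge (W : {set V}) (a y : V) :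
    a != y -> y \in W -> ear W a y [set [set a; y]]
| ear_cons (W : {set V}) (a z y : V) P :
    z \notin W -> z != a -> y \in W ->
    ear (z |: W) z y P -> ear W a y ([set a; z] |: P).

Section Ears.
Variable V : finType.
Implicit Types (C F P : {set {set V}}) (W : {set V}) (a y z : V).

Lemma ear_end W a y P : ear W a y P -> y \in W.
Proof. by case. Qed.

Lemma ear_doubletons W a y P : ear W a y P -> doubletons P.
Proof.
elim=> {W a y P} [W a y _ _ f|W a z y P _ _ _ _ IH f].
  by rewrite inE => /eqP ->; exists a, y.
by rewrite in_setU1 => /orP[/eqP ->|/IH //]; exists a, z.
Qed.

Lemma ear_edge_inside W a y P f : ear W a y P ->
  f \in P -> f \subset W -> f = [set a; y].
Proof.
elim=> {W a y P} [W a y _ _|W a z y P zW _ _ _ IH]; first by rewrite inE => /eqP.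
rewrite in_setU1 => /orP[/eqP -> /subsetP/(_ z (set22 a z))|fP fW].
  by rewrite (negbTE zW).
have fzy := IH fP (subset_trans fW (subsetUr _ _)).
by case/negP: zW; apply: (subsetP fW); rewrite fzy set21.
Qed.

Lemma ear_conn W a y P : ear W a y P ->
  conn P a y /\ {in cover P, forall w, conn P a w}.
Proof.
elim=> {W a y P} [W a y _ _|W a z y P _ _ _ _ [IHy IHw]].
  split; first by apply: conn_edge; rewrite inE.
  move=> w; rewrite cover1 => /set2P[]->; first exact: connect0.
  by apply: conn_edge; rewrite inE.
have az : conn ([set a; z] |: P) a z by apply: conn_edge; rewrite setU11.
split; first exact: conn_trans az (conn_setU1r _ IHy).
move=> w; rewrite cover_setU1 in_setU => /orP[/set2P[]->|/IHw zw].
- exact: connect0.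
- exact: az.
- exact: conn_trans az (conn_setU1r _ zw).
Qed.

Variables u v : V.
Local Notation uv := [set u; v].
Local Notation beta := (beta u v).
Local Open Scope ring_scope.

Lemma beta_pendant C F a z : uv \in F -> a \in cover (C :|: F) ->
  z \notin cover (C :|: F) -> beta ([set a; z] |: C) F = beta C F.
Proof.
move=> uvF aCF zCF.
have az : a != z by apply: contraNneq zCF => <-.
have zF : z \notin cover F by apply: notin_cover_sub zCF; apply: subsetUr.
have zC : z \notin cover C by apply: notin_cover_sub zCF; apply: subsetUl.
have [zu zv] : z != u /\ z != v.
  by split; apply: contraNneq zF => ->; apply/bigcupP; exists uv;
    rewrite ?set21 ?set22.
have sumE : beta_sum u v ([set a; z] |: C) F = beta_sum u v C F.
  apply: eq_bigr => A AS; congr (_ * (~~ _)%:R).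
  apply/idP/idP; last by rewrite setUCA; apply: conn_setU1r.
  have zAC : z \notin cover (A :|: C).
    apply: notin_cover_sub zCF; rewrite setUC setUS //.
    exact: subset_trans AS (subD1set _ _).
  rewrite setUCA => /conn_setU1P/or3P[//|/andP[_]|/andP[]].
  - by rewrite conn_isolated // (negbTE zv).
  - by rewrite connC conn_isolated // (negbTE zu).
have kC : ncomp C = (ncomp ([set a; z] |: C)).+1.
  by rewrite (ncomp_setU1 C a z) connC conn_isolated // eq_sym az addn1.
have kCF : ncomp (C :|: F) = (ncomp ([set a; z] |: C :|: F)).+1.
  rewrite (ncomp_setU1 (C :|: F) a z) connC conn_isolated //.
  by rewrite eq_sym az addn1 setUA.
by rewrite /beta sumE kC kCF addSn addnS !exprS !mulN1r opprK.
Qed.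

Lemma beta_chord C F a y : uv \in F -> doubletons F ->
  ~~ conn C a y -> conn (C :|: F) a y ->
  beta C F <= beta C (F :|: [set [set a; y]]).
Proof.
move=> uvF dF nCay cay; set h := [set a; y].
have [hF|hF] := boolP (h \in F); first by rewrite (setUidPl _) // sub1set.
have hC : h \notin C by apply: contra nCay; apply: conn_edge.
have huv : h != uv by apply: contraNneq hF => ->.
have hFh : h \in F :|: [set h] by rewrite in_setU set11 orbT.
have cay' : conn ((C :|: (F :|: [set h])) :\ h) a y.
  apply: conn_sub cay; apply/subsetP => f; rewrite !inE.
  by case: (f =P h) => [->|]; rewrite ?(negbTE hF) ?(negbTE hC) ?orbF.
rewrite (beta_delete_contract hFh huv nCay cay') setUC setU1K //.
by rewrite lerDl (beta_ge0 _ uvF dF).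
Qed.

Lemma beta_ear_step C F P a z y : let h := [set a; z] in
  uv \in F -> doubletons (F :|: P) -> a \in cover (C :|: F) ->
  z \notin cover (C :|: F) -> h \notin P -> conn (C :|: F) a y -> conn P z y ->
  beta (h |: C) F <= beta (h |: C) (F :|: P) ->
  beta C F <= beta C (F :|: (h |: P)).
Proof.
move=> h uvF dFP aCF zCF hP cay czy IH.
have zC : z \notin cover C by apply: notin_cover_sub zCF; apply: subsetUl.
have hCF : h \notin C :|: F.
  by apply: contra zCF => hCF; apply/bigcupP; exists h; rewrite ?set22.
have huv : h != uv by apply: contraNneq hCF => ->; rewrite inE uvF orbT.
have nCaz : ~~ conn C a z.
  by rewrite connC conn_isolated //; apply: contraNneq zCF => ->.
have caz : conn ((C :|: (h |: (F :|: P))) :\ h) a z.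
  have CFsub : C :|: F \subset (C :|: (h |: (F :|: P))) :\ h.
    apply/subsetP => f fCF; rewrite in_setD1 (contraNneq _ hCF) => [|<-] //.
    by move: fCF; rewrite !inE => /orP[]->; rewrite ?orbT.
  have Psub : P \subset (C :|: (h |: (F :|: P))) :\ h.
    apply/subsetP => f fP; rewrite in_setD1 !inE fP !orbT andbT.
    by apply: contraNneq hP => <-.
  apply: conn_trans (conn_sub CFsub cay) _.
  by rewrite connC; apply: conn_sub Psub czy.
have hFP : h \in h |: (F :|: P) by rewrite setU11.
have hnFP : h \notin F :|: P.
  by rewrite inE negb_or hP andbT; apply: contra hCF; rewrite inE orbC => ->.
rewrite setUCA (beta_delete_contract hFP huv nCaz caz) setU1K //.
rewrite -(beta_pendant _ aCF zCF) //; apply: le_trans IH _.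
by rewrite lerDr (beta_ge0 _ _ dFP) // inE uvF.
Qed.

Lemma beta_ear W a y P : ear W a y P -> forall C F,
  W = cover (C :|: F) -> a \in W -> uv \in F -> doubletons F ->
  ~~ conn C a y -> conn (C :|: F) a y -> beta C F <= beta C (F :|: P).
Proof.
elim=> {W a y P} [W a y _ _|W a z y P zW za yW ePy IH] C F WE aW uvF dF nCay cay.
  exact: beta_chord.
have zC : z \notin cover C.
  by apply: notin_cover_sub (subsetUl C F) _; rewrite -WE.
have [czy _] := ear_conn ePy.
apply: (beta_ear_step (y := y)); rewrite -?WE //.
- by move=> f; rewrite inE => /orP[/dF|/(ear_doubletons ePy)].
- apply/negP => hP.
  have hW : [set a; z] \subset z |: W.
    by apply/subsetP => w /set2P[]->; rewrite !inE ?aW ?eqxx ?orbT.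
  case/set2_eqP: (ear_edge_inside ePy hP hW) => -[az _].
  + by rewrite az eqxx in za.
  + by rewrite az /conn connect0 in nCay.
- apply: IH; rewrite ?setU11 //.
  + rewrite -setUA cover_setU1 -WE; apply/setP => w; rewrite !inE.
    by case: (w =P a) => [->|]; rewrite ?aW ?orbT.
  + apply/negP => /conn_setU1P/or3P[|/andP[]|/andP[_]].
    * by rewrite conn_isolated // => /eqP zy; rewrite -zy in yW; rewrite yW in zW.
    * by rewrite conn_isolated // (negbTE za).
    * by rewrite (negbTE nCay).
  + apply: (conn_trans (y := a)); last by rewrite -setUA; apply: conn_setU1r.
    by rewrite connC; apply: conn_edge; rewrite !inE eqxx.
Qed.

End Ears.

Section TwoConnectedGraph.
Variable V : finType.
Variable er : rel V.
Hypothesis sg : simple_graph er.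
Hypothesis tc : two_connected er.
Implicit Types (K P : {set {set V}}) (W : {set V}).
Local Notation E := (edges er).

Lemma edgesP f : f \in E -> exists x y, [/\ er x y, x != y & f = [set x; y]].
Proof.
case/imsetP => -[x y]; rewrite inE /= => exy ->; exists x, y; split => //.
by apply: contraTneq exy => ->; rewrite sg.1.
Qed.

Lemma mem_edges x y : er x y -> [set x; y] \in E.
Proof. by move=> exy; apply/imsetP; exists (x, y); rewrite ?inE. Qed.

Lemma edges_doubletons K : K \subset E -> doubletons K.
Proof. by move=> KE f /(subsetP KE) /edgesP[x [y [_ _ ->]]]; exists x, y. Qed.

Lemma conn_edges x y : conn E x y.
Proof.
have [_ cE _] := tc; apply: connect_sub (cE x y) => c d ecd.
exact/connect1/mem_edges.
Qed.

Lemma exists_edge : exists u v, er u v.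
Proof.
have [V3 cE _] := tc.
have /card_gt0P[x _] : (0 < #|V|)%N by apply: leq_trans V3.
have /set0Pn[y] : [set~ x] != set0.
  by rewrite -cards_eq0 cardsC1; move: V3; case: #|V| => [|[|[]]].
rewrite in_setC => yx.
have [a [b [_ _ eab]]] := connect_exit (cE x y) (set11 x) yx.
by exists a, b.
Qed.

Lemma ncomp_edges : ncomp E = 1%N.
Proof.
have [u _] := exists_edge.
rewrite /ncomp (eq_n_comp_r (a' := connect (sub_rel E) u)) ?n_comp_connect //.
  exact: conn_sym.
by move=> y; rewrite !inE; symmetry; exact: conn_edges.
Qed.

Section PathsAvoidingVertex.
Variable a : V.
Let er_a c d := [&& c != a, d != a & er c d].

(* Follow a path avoiding a from b \notin W0 until it first enters W0; the
   set W holds W0 and the vertices visited so far. *)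
Lemma path_ear W0 p : forall W b, path er_a b p -> uniq (b :: p) ->
  {in p, forall w, w \in W -> w \in W0} -> W0 \subset W ->
  last b p \in W0 -> b \notin W0 ->
  exists y P, [/\ ear W b y P, y \in W0, y != a & P \subset E].
Proof.
elim: p => [|w p IH] W b /=; first by move=> _ _ _ _ ->.
move=> /andP[/and3P[ba wa ebw] pp] /andP[bp up] pW0 W0W lW0 bW0.
have bw : b != w by apply: contraNneq bp => ->; rewrite inE eqxx.
have [wW|wW] := boolP (w \in W).
  exists w, [set [set b; w]]; split; rewrite ?sub1set ?mem_edges //.
    exact: ear_edge.
  by apply: pW0; rewrite ?inE ?eqxx.
have pW0' : {in p, forall w', w' \in w |: W -> w' \in W0}.
  move=> w' w'p; rewrite in_setU1 => /orP[/eqP w'w|w'W].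
    by move: up; rewrite /= -w'w w'p.
  by apply: pW0; rewrite // inE w'p orbT.
have wW0 : w \notin W0 by apply: contra wW; apply: (subsetP W0W).
have [y [P [ePy yW0 ya PE]]] :=
  IH (w |: W) w pp up pW0' (subset_trans W0W (subsetUr _ _)) lW0 wW0.
exists y, ([set b; w] |: P); split => //.
  by apply: ear_cons => //; [rewrite eq_sym | apply: (subsetP W0W)].
by rewrite subUset sub1set mem_edges.
Qed.

End PathsAvoidingVertex.

Lemma ear_exists_from_outside K x1 x2 z0 : K \subset E ->
  x1 \in cover K -> x2 \in cover K -> x1 != x2 -> z0 \notin cover K ->
  exists a y P, [/\ ear (cover K) a y P, a \in cover K, a != y,
    P \subset E & ~~ (P \subset K)].
Proof.
move=> KE x1K x2K x12 z0K; have [_ cE cEa] := tc.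
have [a [z [aK zK eaz]]] := connect_exit (cE x1 z0) x1K z0K.
pose y0 := if x1 != a then x1 else x2.
have y0K : y0 \in cover K by rewrite /y0; case: ifP.
have y0a : y0 != a by rewrite /y0; case: ifP => // /negbFE/eqP <-; rewrite eq_sym.
have za : z != a by apply: contraNneq zK => ->.
case/connectP: (cEa a z y0 za y0a) => p pp y0E.
case: (shortenP pp) y0E => p' pp' up' _ y0E.
have p'K : {in p', forall w, w \in z |: cover K -> w \in cover K}.
  move=> w wp; rewrite in_setU1 => /orP[/eqP wz|//].
  by move: up'; rewrite /= -wz wp.
have [|y [P [ePy yK ya PE]]] := path_ear pp' up' p'K (subsetUr _ _) _ zK.
  by rewrite -y0E.
exists a, y, ([set a; z] |: P); split; rewrite 1?eq_sym //.
- by apply: ear_cons.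
- by rewrite subUset sub1set mem_edges.
- rewrite subUset sub1set negb_and; apply/orP; left; apply: contra zK => azK.
  by apply/bigcupP; exists [set a; z]; rewrite ?set22.
Qed.

Lemma ear_exists K f : f \in K -> K \subset E -> K != E ->
  exists a y P, [/\ ear (cover K) a y P, a \in cover K, a != y,
    P \subset E & ~~ (P \subset K)].
Proof.
move=> fK KE KnE; have [x1 [x2 [_ x12 fx]]] := edgesP (subsetP KE f fK).
have [x1K x2K] : x1 \in cover K /\ x2 \in cover K.
  by split; apply/bigcupP; exists f; rewrite // fx ?set21 ?set22.
have [g gE gK] : exists2 g, g \in E & g \notin K.
  apply/exists_inP; apply: contraR KnE; rewrite negb_exists_in => /forall_inP gK.
  by rewrite eqEsubset KE; apply/subsetP => g /gK/negPn.
have [x [y [_ xy gxy]]] := edgesP gE.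
have outside := ear_exists_from_outside KE x1K x2K x12.
have [xK|/outside //] := boolP (x \in cover K).
have [yK|/outside //] := boolP (y \in cover K).
exists x, y, [set g]; split; rewrite ?sub1set //.
by rewrite gxy; apply: ear_edge.
Qed.

Definition connected_on K := {in cover K &, forall x y, conn K x y}.

Lemma connected_on_ear K a y P : connected_on K -> a \in cover K ->
  ear (cover K) a y P -> connected_on (K :|: P).
Proof.
move=> cK aK ePy; have [_ cP] := ear_conn ePy.
have ca x : x \in cover (K :|: P) -> conn (K :|: P) a x.
  rewrite cover_setU in_setU => /orP[xK|xP].
    by apply: conn_sub (cK _ _ aK xK); apply: subsetUl.
  by apply: conn_sub (cP _ xP); apply: subsetUr.
by move=> x y' /ca xa /ca ya; apply: conn_trans ya; rewrite connC.
Qed.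

Variables u v : V.
Hypothesis euv : er u v.
Local Notation uv := [set u; v].
Local Notation beta := (beta u v).
Local Open Scope ring_scope.

Lemma beta_edges_pos : 1 <= beta set0 E.
Proof.
have uv_neq : u != v by apply: contraTneq euv => ->; rewrite sg.1.
suff ind n K : (#|E :\: K| < n)%N -> uv \in K -> K \subset E ->
    connected_on K -> 1 <= beta set0 K -> 1 <= beta set0 E.
  apply: (ind _ [set uv] (ltnSn _)); rewrite ?set11 ?sub1set ?mem_edges //.
    move=> x y; rewrite cover1 => /set2P[]-> /set2P[]->; rewrite /conn ?connect0 //.
      by apply: conn_edge; rewrite inE.
    by rewrite -/(conn _ _ _) connC; apply: conn_edge; rewrite inE.
  by rewrite beta_edge ?conn0 ?uv_neq ?lexx.
elim: n K => // n IH K ltKn uvK KE cK betaK.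
have [KEq|KnE] := eqVneq K E; first by rewrite -KEq.
have [a [y [P [ePy aK ay PE PK]]]] := ear_exists uvK KE KnE.
apply: (IH (K :|: P)); rewrite ?inE ?uvK ?subUset ?KE ?PE //.
- have [f fP fK] : exists2 f, f \in P & f \notin K.
    apply/exists_inP; apply: contraR PK; rewrite negb_exists_in.
    by move=> /forall_inP PK; apply/subsetP => f /PK/negPn.
  have EKP : E :\: (K :|: P) \proper E :\: K.
    rewrite properE setDS ?subsetUl //=; apply/subsetPn; exists f.
      by rewrite inE fK (subsetP PE).
    by rewrite !inE fP orbT.
  by rewrite -ltnS; apply: leq_trans (proper_card EKP) ltKn.
- exact: connected_on_ear cK aK ePy.
- apply: le_trans betaK _; apply: (beta_ear ePy); rewrite ?set0U ?conn0 //.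
  + exact: edges_doubletons.
  + by apply: cK; last exact: ear_end ePy.
Qed.

Lemma chromatic_deriv1_edges_neq0 : chromatic_deriv1 E != 0.
Proof.
rewrite (chromatic_deriv1_beta_sum (mem_edges euv)); apply: contraTneq beta_edges_pos.
by rewrite /beta => ->; rewrite mulr0.
Qed.

End TwoConnectedGraph.

Section MonicYIrreducible.
Variable F : closedFieldType.
Implicit Types (p a b : {poly {poly F}}) (x r : F).
Local Open Scope ring_scope.

Lemma monicY_factor_unit_or_root p a b x r m :
  swapXY p \is monic -> p.[x%:P] = ('X - r%:P) ^+ m -> p = a * b ->
  a \is a GRing.unit \/ a.[x, r] = 0.
Proof.
move=> mon_p px pab.
have lab : lead_coef (swapXY a) * lead_coef (swapXY b) = 1.
  by rewrite -lead_coefM -rmorphM -pab (monicP mon_p).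
have : lead_coef (swapXY a) \is a GRing.unit.
  by apply/unitrPr; exists (lead_coef (swapXY b)).
rewrite poly_unitE => /andP[/size_poly1P[l l0 la] _].
have a0 : swapXY a != 0.
  rewrite swapXY_eq0; apply: contraTneq mon_p => a0.
  by rewrite pab a0 mul0r rmorph0 monicE lead_coef0 eq_sym oner_eq0.
have [sa|sa] := leqP (size (swapXY a)) 1.
  left; rewrite -[a]swapXYK (size1_polyC sa).
  have sa1 : size (swapXY a) = 1%N by apply/eqP; rewrite eqn_leq sa lt0n size_poly_eq0.
  have -> : (swapXY a)`_0 = l%:P by rewrite -la lead_coefE sa1.
  by rewrite swapXY_polyC map_polyC; do 2 apply: rmorph_unit; rewrite unitfE.
right; have sax : size a.[x%:P] = size (swapXY a).
  by rewrite horner_polyC size_map_poly_id0 // la /horner_eval hornerC.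
have [z /rootP az] : exists z, root a.[x%:P] z.
  by apply/closed_rootP; rewrite sax neq_ltn sa orbT.
have /eqP : (p.[x%:P]).[z] = 0 by rewrite pab !hornerM az mul0r.
rewrite px horner_exp hornerXsubC expf_eq0 subr_eq0 => /andP[_ /eqP zr].
by rewrite -zr.
Qed.

Lemma monicY_irreducible p x r m :
  swapXY p \is monic -> p.[x%:P] = ('X - r%:P) ^+ m -> (p^`()).[x, r] != 0 ->
  irreducible_elt p.
Proof.
move=> mon_p px dp; split.
- by apply: contraNneq dp => ->; rewrite deriv0 !horner0.
- apply: contra dp; rewrite poly_unitE => /andP[/size_poly1P[c _ ->] _].
  by rewrite derivC !horner0.
move=> a b pab.
have [|ax] := monicY_factor_unit_or_root mon_p px pab; first by left.
have [|bx] := monicY_factor_unit_or_root mon_p px (etrans pab (mulrC a b)).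
  by right.
by move: dp; rewrite pab derivM !hornerD !hornerM ax bx mulr0 mul0r addr0 eqxx.
Qed.

End MonicYIrreducible.

(* Z_E with v replaced by v - c: Zpotts is the case c = 0 and Zpotts_y the
   case c = 1. *)
Definition potts_shift (R : nzRingType) (V : finType) (E : {set {set V}}) (c : R)
  : {poly {poly R}} :=
  \sum_(A : {set {set V}} | A \subset E) 'X ^+ ncomp A * ('X - c%:P)%:P ^+ #|A|.

Section PottsShift.
Variable C : numClosedFieldType.
Variable V : finType.
Variable E : {set {set V}}.
Variable c : C.
Local Open Scope ring_scope.
Local Notation Z := (potts_shift E c).

Lemma potts_shift_monicY p : ncomp E = 1%N -> Z = 'X * p -> swapXY p \is monic.
Proof.
move=> kE Zp.
have swapZ : swapXY Z = \sum_(A : {set {set V}} | A \subset E)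
    ('X ^+ ncomp A)%:P * ('X - c%:P%:P) ^+ #|A|.
  rewrite rmorph_sum; apply: eq_bigr => A _.
  by rewrite rmorphM !rmorphXn /= swapXY_X swapXY_polyC map_polyXsubC /= -rmorphXn.
have size_term A : size (('X ^+ ncomp A)%:P * ('X - c%:P%:P) ^+ #|A|) = #|A|.+1.
  by rewrite size_Cmul ?size_exp_XsubC // expf_neq0 // polyX_eq0.
have leadZ : lead_coef (swapXY Z) = 'X.
  rewrite swapZ (bigD1 E) //= lead_coefDl.
    by rewrite lead_coefM lead_coefC lead_coef_exp lead_coefXsubC expr1n mulr1 kE.
  rewrite size_term ltnS; apply: leq_trans (size_sum _ _ _) _.
  apply/bigmax_leqP => A /andP[AE AnE]; rewrite size_term.
  by apply: proper_card; rewrite properEneq AnE.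
have X0 : 'X != 0 :> {poly C} by rewrite polyX_eq0.
rewrite monicE; apply/eqP/(mulfI X0).
by rewrite mulr1 -[RHS]leadZ Zp rmorphM /= swapXY_X lead_coefM lead_coefC.
Qed.

Lemma potts_shift_at1 : Z.[1%:P] = ('X - (c - 1)%:P) ^+ #|E|.
Proof.
have -> : 'X - (c - 1)%:P = 'X - c%:P + 1.
  by rewrite rmorphB /= polyC1 opprB addrA addrAC.
rewrite -sum_subsets_exp horner_sum; apply: eq_bigr => A _.
by rewrite hornerM hornerXn expr1n mul1r -rmorphXn hornerC.
Qed.

Lemma deriv_potts_shift_at :
  (Z^`()).[1, c - 1] =
  (chromatic_deriv1 E)%:~R.
Proof.
rewrite linear_sum /= !horner_sum /chromatic_deriv1 rmorph_sum.
apply: eq_bigr => A _.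
rewrite derivM -rmorphXn derivC mulr0 addr0 derivXn /=.
rewrite !hornerM !hornerMn hornerXn expr1n !hornerC horner_exp hornerXsubC.
by rewrite addrAC subrr sub0r rmorphM /= rmorphXn rmorphN1 rmorph_nat mulrC.
Qed.

Lemma potts_shift_quotient_irreducible p : ncomp E = 1%N -> (0 < #|E|)%N ->
  chromatic_deriv1 E != 0 -> Z = 'X * p -> irreducible_elt p.
Proof.
move=> kE E0 sum_neq0 Zp.
have p1 : p.[1%:P] = ('X - (c - 1)%:P) ^+ #|E|.
  by rewrite -potts_shift_at1 Zp hornerM hornerX polyC1 mul1r.
apply: (monicY_irreducible (potts_shift_monicY kE Zp) p1).
have : (Z^`()).[1, c - 1] != 0 by rewrite deriv_potts_shift_at intr_eq0.
rewrite Zp derivM derivX mul1r !hornerD !hornerM hornerX p1 horner_exp hornerXsubC.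
by rewrite subrr expr0n eqn0Ngt E0 add0r hornerC mul1r.
Qed.

End PottsShift.

Local Open Scope ring_scope.

Theorem proposition5p1 (R : realType) (V : finType) (e : rel V) :
  simple_graph e -> two_connected e ->
  (forall Zt : {poly {poly R[i]}}, Zpotts R e = 'X * Zt -> irreducible_elt Zt) /\
  (forall Zt : {poly {poly R[i]}}, Zpotts_y R e = 'X * Zt -> irreducible_elt Zt).
Proof.
move=> sg tc; have [u [v euv]] := exists_edge tc.
have E0 : (0 < #|edges e|)%N by apply/card_gt0P; exists [set u; v]; apply: mem_edges.
have irr (c : R[i]) (Zt : {poly {poly R[i]}}) :
  potts_shift (edges e) c = 'X * Zt -> irreducible_elt Zt.
  exact: potts_shift_quotient_irreducible (ncomp_edges tc) E0
    (chromatic_deriv1_edges_neq0 sg tc euv).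
split=> Zt ZE; [apply: (irr 0) | apply: (irr 1)]; rewrite -ZE; apply: eq_bigr => A _.
- by rewrite subr0.
- by rewrite rmorphB /= polyC1.
Qed.
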